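(* Let $\psi$ be a CNF formula with only positive literals, with clauses $C_1,\dots,C_m$ each consisting of three distinct variables, and variables $x_1,\dots,x_p$, in which every variable appears in at least $3$ clauses. Let $G$ be the graph constructed as follows: (1) for each variable $x_i$ create a cycle $D_i$ whose number of vertices equals the number of clauses containing $x_i$; (2) add a vertex $a$ adjacent to every vertex of all cycles $D_1,\dots,D_p$; (3) for each clause $\{x_i,x_j,x_k\}$ add a vertex $u_{ijk}$ adjacent to one vertex of each of $D_i,D_j,D_k$, choosing in each cycle a vertex not yet adjacent to any clause-vertex; (4) subdivide once every edge of the cycles $D_1,\dots,D_p$ and every edge incident to $a$. If $G$ has a $1/2$-shallow topological minor of density at least $\frac{5m}{2m+1}$, then $\psi$ has an assignment in which every clause contains exactly one true variable.
   Context: A graph $H$ is a $1/2$-shallow topological minor of $G$ if some graph obtained from $H$ by subdividing each edge at most once is isomorphic to a subgraph of $G$. The density of $H$ is $\|H\|/|H|$ (number of edges divided by number of vertices). *)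

From mathcomp Require Import all_boot all_order all_algebra.
Set Implicit Arguments. Unset Strict Implicit. Unset Printing Implicit Defensive.

Definition simple_graph (V : finType) (e : rel V) : Prop :=
  symmetric e /\ irreflexive e.

Definition nedges (V : finType) (e : rel V) : nat :=
  #|[set E : {set V} | [exists x, exists y, e x y && (E == [set x; y])]]|.

Definition density (V : finType) (e : rel V) : rat :=
  ((nedges e)%:R / #|V|%:R)%R.

(* H is a 1/2-shallow topological minor of G: some graph obtained from H by
   subdividing each edge at most once is isomorphic to a subgraph of G. *)
Definition half_shallow_top_minor (VH : finType) (eH : rel VH)
    (VG : finType) (eG : rel VG) : Prop :=
  exists (phi : VH -> VG) (rho : VH -> VH -> option VG),
    injective phi /\
    (forall x y, eH x y ->
       rho x y = rho y x /\
       match rho x y with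
       | None => eG (phi x) (phi y)
       | Some w => [/\ eG (phi x) w, eG w (phi y) & forall v, phi v != w]
       end) /\
    (forall x y x' y' w, eH x y -> eH x' y' ->
       rho x y = Some w -> rho x' y' = Some w ->
       (x = x' /\ y = y') \/ (x = y' /\ y = x')).

(* The cycle D_i has one vertex per clause containing x_i; the vertex of D_i
   labelled j is the one adjacent to the clause vertex u_j.  The cyclic order
   of D_i is given by a sequence ord i listing the clauses containing x_i;
   its successor function is path.next.
   Raw vertices:
     inl (inl tt)       : the apex a
     inl (inr j)        : the clause vertex u_j
     inr ((i,j), 0)     : the vertex of D_i labelled j
     inr ((i,j), 1)     : subdivision vertex of the cycle edge from (i,j) to
                          (i, next (ord i) j)
     inr ((i,j), 2)     : subdivision vertex of the edge a -- (i,j)        *)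

Definition raw_vertex (p m : nat) : finType :=
  ((unit + 'I_m) + (('I_p * 'I_m) * 'I_3))%type.

Definition valid_vertex (p m : nat) (C : 'I_m -> {set 'I_p})
    (x : raw_vertex p m) : bool :=
  match x with
  | inl _ => true
  | inr (q, _) => q.1 \in C q.2
  end.

Definition Gvertex (p m : nat) (C : 'I_m -> {set 'I_p}) : finType :=
  {x : raw_vertex p m | valid_vertex C x}.

Definition raw_adj0 (p m : nat) (ord : 'I_p -> seq 'I_m)
    (x y : raw_vertex p m) : bool :=
  match x, y with
  | inl (inl _), inr (_, k) => nat_of_ord k == 2
  | inl (inr j), inr (q, k) => (nat_of_ord k == 0) && (q.2 == j)
  | inr (q, k), inr (q', k') =>
      [&& nat_of_ord k == 2, nat_of_ord k' == 0 & q == q']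
      || [&& nat_of_ord k == 0, nat_of_ord k' == 1 & q == q']
      || [&& nat_of_ord k == 1, nat_of_ord k' == 0, q.1 == q'.1
            & q'.2 == next (ord q.1) q.2]
  | _, _ => false
  end.

Definition Gadj (p m : nat) (C : 'I_m -> {set 'I_p}) (ord : 'I_p -> seq 'I_m)
    : rel (Gvertex C) :=
  fun x y => raw_adj0 ord (val x) (val y) || raw_adj0 ord (val y) (val x).

From mathcomp Require Import all_boot all_order all_algebra zify.
Set Implicit Arguments. Unset Strict Implicit. Unset Printing Implicit Defensive.
Import GRing.Theory Num.Theory.

(* Every vertex of G but the apex a has degree at
   most 4, so if a is not an image H has density at most 2 < 5m/(2m+1) (and
   m >= 3 because every variable lies in three clauses).  Otherwise the edges
   at the vertex mapped to a are charged to the vertices mapped to the t_ij or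
   v_ij they pass through, and the other vertices of H are grouped by the
   clause gadget {u_j, v_ij, s_ij, t_ij} containing their image.  A local count
   bounds (2m+1) times the charge of gadget j by 10 + 10m |X_j|; these bounds
   sum to 10m|H|, so the density hypothesis forces equality in every gadget.
   Equality means that exactly two of the three v_ij are images, each of
   degree 4, so the edge through s_ij reaches v_i,next(j).  Hence whether v_ij
   is an image depends on i only, and making x_i true iff it is not gives
   exactly one true variable per clause. *)

Lemma handshake_leq (T : finType) (e : rel T) : irreflexive e -> symmetric e ->
  2 * nedges e <= \sum_x #|[set y | e x y]|.
Proof.
move=> e_irr e_sym.
have -> : \sum_x #|[set y | e x y]| = \sum_x \sum_(y | e x y) 1.
  by apply: eq_bigr => x _; rewrite sum1dep_card.
rewrite pair_big_dep /=.
set E := [set S : {set T} | [exists x, exists y, e x y && (S == [set x; y])]].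
rewrite (partition_big (fun q : T * T => [set q.1; q.2]) (mem E)) /=; last first.
  move=> [x y] /= exy; rewrite inE; apply/existsP; exists x; apply/existsP; exists y.
  by rewrite exy eqxx.
rewrite /nedges -/E -sum1_card big_distrr /=.
apply: leq_sum => S; rewrite inE => /existsP [x /existsP [y /andP [exy /eqP ->]]].
have xy_neq_yx : (x, y) != (y, x) by apply: contraTneq exy => -[->]; rewrite e_irr.
rewrite (bigD1 (x, y)) /=; last by rewrite exy eqxx.
rewrite (bigD1 (y, x)) /=; last by rewrite e_sym exy setUC eqxx eq_sym xy_neq_yx.
by rewrite muln1 addnA leq_addr.
Qed.

Lemma inl_eq (A B : eqType) (x y : A) : (@inl A B x == inl y) = (x == y).
Proof. by []. Qed.

Lemma inr_eq (A B : eqType) (x y : B) : (@inr A B x == inr y) = (x == y).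
Proof. by []. Qed.

Lemma sum_nat_of_bool (T : finType) (A : {pred T}) (P : pred T) :
  \sum_(x in A) (P x : nat) = #|[set x in A | P x]|.
Proof. by rewrite -sum1dep_card big_mkcondr. Qed.

Lemma card_le_count (T : finType) (A : {set T}) (s : seq T) :
  {subset A <= s} -> #|A| <= count (mem A) s.
Proof.
move=> sub_As; rewrite -size_filter; apply: leq_trans (card_size _).
by apply/subset_leq_card/subsetP => x xA; rewrite mem_filter /= xA sub_As.
Qed.

Lemma cycle_next_closed (T : finType) (s : seq T) (P : pred T) : uniq s ->
  {in s, forall x, P x -> P (next s x)} -> {in s &, forall x y, P x -> P y}.
Proof.
move=> s_uniq closedP x y xs ys Px.
have /connectP [q pq ->] := connect_cycle (cycle_next s_uniq) xs ys.
elim: q x xs Px pq => [|z q IH] x xs Px //= /andP [/eqP <- pq].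
by apply: IH => //; [rewrite mem_next | exact: closedP].
Qed.

Lemma nat_ratio_le (R : numFieldType) (a b c n : nat) : 0 < a -> 0 < b ->
  (a%:R / b%:R <= c%:R / n%:R :> R)%R -> 0 < n /\ a * n <= c * b.
Proof.
move=> a_gt0 b_gt0 le_ab_cn.
have n_gt0 : 0 < n.
  case: n le_ab_cn => // /[!(invr0, mulr0)].
  by rewrite ler_pdivrMr ?ltr0n // mul0r lern0 eqn0Ngt a_gt0.
split => //; move: le_ab_cn.
by rewrite ler_pdivlMr ?ltr0n // mulrAC ler_pdivrMr ?ltr0n // -!natrM ler_nat.
Qed.

Lemma clause_arith m v w r D : 3 <= m -> v <= 3 -> w <= v -> (0 < r \/ w <= 2) ->
  D <= 4 * v + w + 3 * r ->
  (2 * m + 1) * D <= 10 + 10 * m * (v + r) /\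
  ((2 * m + 1) * D = 10 + 10 * m * (v + r) -> [/\ r = 0, v = 2 & D = 10]).
Proof.
move=> m_ge3 v_le3 w_le_v r_or_w D_le.
have mD_le : m * D <= m * (4 * v + w + 3 * r) by rewrite leq_mul2l D_le orbT.
have mw_le : m * w <= m * v by rewrite leq_mul2l w_le_v orbT.
have mv_le : m * v <= m * 3 by rewrite leq_mul2l v_le3 orbT.
have [r0 | r_gt0] := posnP r; last first.
  have mr_ge : 3 * r <= m * r by rewrite leq_mul2r m_ge3 orbT.
  have mr_ge_m : m <= m * r by rewrite leq_pmulr.
  by split; [lia | move=> tight; exfalso; lia].
have mw_le2 : m * w <= m * 2.
  by rewrite leq_mul2l; case: r_or_w => [|->]; rewrite ?r0 ?orbT.
subst r; have : v = 0 \/ v = 1 \/ v = 2 \/ v = 3 by lia.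
by case=> [|[|[|]]] vE; subst v; (split; [lia | move=> tight; split; lia]).
Qed.

Section Construction.
Variables (p m : nat) (C : 'I_m -> {set 'I_p}) (ord : 'I_p -> seq 'I_m).
Hypothesis C_card : forall j, #|C j| = 3.
Hypothesis ord_uniq : forall i, uniq (ord i).
Hypothesis mem_ord : forall i j, (j \in ord i) = (i \in C j).

Lemma exactly_one_unmarked (marked : 'I_p -> 'I_m -> bool) :
  (forall i j j', i \in C j -> i \in C j' -> marked i j -> marked i j') ->
  (forall j, #|[set i in C j | marked i j]| = 2) ->
  exists alpha : 'I_p -> bool, forall j, #|[set i in C j | alpha i]| = 1.
Proof.
move=> marked_const marked2.
exists (fun i => [exists j, (i \in C j) && ~~ marked i j]) => j.
have -> : [set i in C j | [exists j, (i \in C j) && ~~ marked i j]] =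
          C j :\: [set i | marked i j].
  apply/setP => i; rewrite !inE; case iCj: (i \in C j); rewrite ?andbT ?andbF //=.
  apply/existsP/idP => [[j' /andP [iCj' unmarked]] | unmarked].
    exact: contra (marked_const _ _ _ iCj iCj') unmarked.
  by exists j; rewrite iCj.
have := cardsID [set i | marked i j] (C j).
by rewrite -setIdE marked2 C_card -[3]/(2 + 1) => /addnI.
Qed.

Lemma clause_next_closed (P : 'I_p -> 'I_m -> bool) :
  (forall i j, i \in C j -> P i j -> P i (next (ord i) j)) ->
  forall i j j', i \in C j -> i \in C j' -> P i j -> P i j'.
Proof.
move=> closedP i j j'; rewrite -!mem_ord => iCj iCj'.
apply: (cycle_next_closed (ord_uniq i)) => // k; rewrite mem_ord; exact: closedP.
Qed.

Notation raw := (raw_vertex p m).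
Notation V := (Gvertex C).
Notation eG := (@Gadj p m C ord).

Definition apex : raw := inl (inl tt).
Definition clause_vx j : raw := inl (inr j).
Definition cycle_vx i j : raw := inr ((i, j), @Ordinal 3 0 isT).
Definition cycle_sub i j : raw := inr ((i, j), @Ordinal 3 1 isT).
Definition apex_sub i j : raw := inr ((i, j), @Ordinal 3 2 isT).

Definition cycle_vxs j : seq raw := [seq cycle_vx i j | i <- enum (C j)].

(* The apex gets [::]: its neighbours are described by Gadj_apex instead. *)
Definition raw_nbrs (r : raw) : seq raw :=
  match r with
  | inl (inl _) => [::]
  | inl (inr j) => cycle_vxs j
  | inr ((i, j), k) =>
      match nat_of_ord k with
      | 0 => [:: apex_sub i j; clause_vx j; cycle_sub i j; cycle_sub i (prev (ord i) j)]
      | 1 => [:: cycle_vx i j; cycle_vx i (next (ord i) j)]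
      | _ => [:: apex; cycle_vx i j]
      end
  end.

Lemma Gadj_raw_nbrs (g h : V) : eG g h -> val g != apex -> val h \in raw_nbrs (val g).
Proof.
case: g h => [[[[]|j]|[[i j] [[|[|[|//]]] ?]]] vg]
             [[[[]|j']|[[i' j'] [[|[|[|//]]] ?]]] vh];
  rewrite /Gadj /= ?orbF ?andbF //= => adj _;
  rewrite /cycle_vxs /cycle_vx /cycle_sub /apex_sub /clause_vx /apex /= ?inE /=.
all: rewrite ?inr_eq ?inl_eq ?xpair_eqE /= in adj *.
- move/eqP: adj => jE; rewrite jE in vh *; apply/mapP; exists i'; rewrite ?mem_enum //.
  by congr inr; congr pair; apply: val_inj.
- by rewrite inr_eq eq_sym adj.
- case/orP: adj => /andP [/eqP -> /eqP ->]; first by rewrite !eqxx.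
  by rewrite prev_next // !eqxx ?orbT.
- by case/andP: adj => /eqP -> /eqP ->; rewrite !eqxx.
- case/orP: adj => /andP [/eqP -> /eqP ->]; last by rewrite !eqxx.
  by rewrite !eqxx orbT.
- by case/andP: adj => /eqP -> /eqP ->; rewrite !eqxx.
Qed.

Lemma Gadj_apex (g h : V) : eG g h -> val g = apex -> exists i j, val h = apex_sub i j.
Proof.
case: g h => [[[[]|j]|[[i j] [[|[|[|//]]] ?]]] vg]
             [[[[]|j']|[[i' j'] [[|[|[|//]]] ?]]] vh];
  rewrite /Gadj /= ?orbF ?andbF //= => adj // _.
by exists i', j'; rewrite /apex_sub; congr inr; congr pair; apply: val_inj.
Qed.

Lemma size_raw_nbrs r : r != apex -> size (raw_nbrs r) <= 4.
Proof.
by case: r => [[[]|j]|[[i j] [[|[|[|//]]] ?]]] //= _; rewrite size_map -cardE C_card.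
Qed.

Definition clause_of (r : raw) : option 'I_m :=
  match r with inl (inl _) => None | inl (inr j) => Some j | inr (q, _) => Some q.2 end.

Lemma clause_of_eq_None r : (clause_of r == None) = (r == apex).
Proof. by case: r => [[[]|j]|[[i j] k]]. Qed.

Section Embedding.
Variables (VH : finType) (eH : rel VH) (phi : VH -> V) (rho : VH -> VH -> option V).
Hypotheses (eH_sym : symmetric eH) (eH_irr : irreflexive eH) (phi_inj : injective phi).
Hypothesis rho_edge : forall x y, eH x y ->
  rho x y = rho y x /\
  match rho x y with
  | None => eG (phi x) (phi y)
  | Some w => [/\ eG (phi x) w, eG w (phi y) & forall v, phi v != w]
  end.
Hypothesis rho_inj : forall x y x' y' w, eH x y -> eH x' y' ->
  rho x y = Some w -> rho x' y' = Some w ->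
  (x = x' /\ y = y') \/ (x = y' /\ y = x').

Definition hop x y : V := if rho x y is Some w then w else phi y.
Definition deg x := #|[set y | eH x y]|.
Definition used_nbrs x : {set raw} := [set val (hop x y) | y in [set y | eH x y]].
Definition hit (r : raw) := [exists x, val (phi x) == r].

Lemma hitP r : reflect (exists x, val (phi x) = r) (hit r).
Proof. by apply: (iffP existsP) => -[x /eqP]; exists x. Qed.

Lemma Gadj_hop x y : eH x y -> eG (phi x) (hop x y).
Proof. by case/rho_edge => _; rewrite /hop; case: (rho x y) => [w [] |]. Qed.

Lemma hop_inj x : {in [set y | eH x y] &, injective (fun y => val (hop x y))}.
Proof.
move=> y y'; rewrite !inE => xy xy' /val_inj.
have [_ hy] := rho_edge xy; have [_ hy'] := rho_edge xy'.
rewrite /hop; move: hy hy'.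
case Ey: (rho x y) => [w|]; case Ey': (rho x y') => [w'|].
- move=> _ _ ww'; subst w'.
  case: (rho_inj xy xy' Ey Ey') => [[_ ->] // | [xy'E yxE]]; subst.
  by rewrite eH_irr in xy.
- by move=> [_ _ w_free] _ wE; move: (w_free y'); rewrite wE eqxx.
- by move=> _ [_ _ w_free] wE; move: (w_free y); rewrite wE eqxx.
- by move=> _ _ /phi_inj.
Qed.

Lemma deg_used_nbrs x : deg x = #|used_nbrs x|.
Proof. by rewrite card_in_imset //; apply: hop_inj. Qed.

Lemma hop_not_hit x y : ~~ hit (val (hop x y)) -> rho x y = Some (hop x y).
Proof. by rewrite /hop; case: (rho x y) => // /hitP []; exists y. Qed.

(* A hop outside the image of phi is the subdivision vertex of the edge, hence
   adjacent to phi y. *)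
Lemma subdiv_hop_far_end x y r :
    eH x y -> val (hop x y) != apex -> ~~ hit (val (hop x y)) ->
  raw_nbrs (val (hop x y)) = [:: val (phi x); r] -> val (phi y) = r.
Proof.
move=> xy hop_apex hop_free nbrsE.
have hopE := hop_not_hit hop_free.
have adj : eG (hop x y) (phi y) by case: (rho_edge xy); rewrite hopE => _ [].
have := Gadj_raw_nbrs adj hop_apex; rewrite nbrsE !inE.
case/orP => [/eqP /val_inj /phi_inj yx | /eqP //].
by rewrite yx eH_irr in xy.
Qed.

Lemma used_nbrs_sub x :
  val (phi x) != apex -> {subset used_nbrs x <= raw_nbrs (val (phi x))}.
Proof.
move=> x_apex r /imsetP [y]; rewrite inE => xy ->.
exact: Gadj_raw_nbrs (Gadj_hop xy) x_apex.
Qed.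

Lemma deg_le_count x : val (phi x) != apex ->
  deg x <= count (mem (used_nbrs x)) (raw_nbrs (val (phi x))).
Proof. by move=> x_apex; rewrite deg_used_nbrs; apply/card_le_count/used_nbrs_sub. Qed.

Lemma deg_le4 x : val (phi x) != apex -> deg x <= 4.
Proof.
move=> x_apex; apply: leq_trans (deg_le_count x_apex) _.
exact: leq_trans (count_size _ _) (size_raw_nbrs x_apex).
Qed.

Lemma deg_cycle_vx x i j : val (phi x) = cycle_vx i j ->
  deg x <= (apex_sub i j \in used_nbrs x) + (clause_vx j \in used_nbrs x)
           + (cycle_sub i j \in used_nbrs x) + (cycle_sub i (prev (ord i) j) \in used_nbrs x).
Proof.
move=> xE; have x_apex : val (phi x) != apex by rewrite xE.
by have := deg_le_count x_apex; rewrite xE /= !addnA addn0.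
Qed.

(* Each edge of H at the vertex mapped onto a leaves a through some t_ij.  It
   is charged to the vertex mapped onto t_ij or, when t_ij is a subdivision
   vertex, to the vertex mapped onto v_ij. *)
Definition apex_used (r : raw) :=
  [exists xa, (val (phi xa) == apex) && (r \in used_nbrs xa)].

Definition apex_charge x : bool :=
  match val (phi x) with
  | inr ((i, j), k) => apex_used (apex_sub i j) &&
      ((nat_of_ord k == 2) || (nat_of_ord k == 0) && ~~ hit (apex_sub i j))
  | _ => false
  end.

Lemma deg_apex_le xa : val (phi xa) = apex -> deg xa <= #|[set x | apex_charge x]|.
Proof.
move=> xa_apex; rewrite deg_used_nbrs.
pose owner x := if val (phi x) is inr ((i, j), _) then apex_sub i j else val (phi x).
apply: leq_trans (leq_imset_card owner _).
apply/subset_leq_card/subsetP => r /imsetP [y]; rewrite inE => xay ->.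
have [i [j hopE]] := Gadj_apex (Gadj_hop xay) xa_apex.
have used : apex_used (apex_sub i j).
  apply/existsP; exists xa; rewrite xa_apex eqxx /=.
  by apply/imsetP; exists y; rewrite ?inE // hopE.
have [/hitP [x xE] | not_hit] := boolP (hit (apex_sub i j)).
  apply/imsetP; exists x; first by rewrite inE /apex_charge xE /= used.
  by rewrite /owner xE hopE.
have yE : val (phi y) = cycle_vx i j.
  by apply: (subdiv_hop_far_end xay); rewrite hopE ?xa_apex.
apply/imsetP; exists y; last by rewrite hopE /owner yE.
by rewrite inE /apex_charge yE /= used not_hit.
Qed.

Definition clause_part j := [set x | clause_of (val (phi x)) == Some j].
Definition cycle_part j := [set x | val (phi x) \in cycle_vxs j].
Definition rest_part j := clause_part j :\: cycle_part j.
Definition clause_charge j := \sum_(x in clause_part j) (deg x + apex_charge x).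

Lemma cycle_partP x j :
  reflect (exists2 i, i \in C j & val (phi x) = cycle_vx i j) (x \in cycle_part j).
Proof.
rewrite inE; apply: (iffP mapP) => -[i iCj xE]; exists i => //; by rewrite mem_enum in iCj *.
Qed.

Lemma cycle_part_sub j : cycle_part j \subset clause_part j.
Proof. by apply/subsetP => x /cycle_partP [i _ xE]; rewrite inE xE. Qed.

Lemma card_clause_part j : #|clause_part j| = #|cycle_part j| + #|rest_part j|.
Proof. by rewrite -(cardsID (cycle_part j)) (setIidPr (cycle_part_sub j)). Qed.

Lemma clause_charge_split j : clause_charge j =
  \sum_(x in cycle_part j) (deg x + apex_charge x)
  + \sum_(x in rest_part j) (deg x + apex_charge x).
Proof.
rewrite /clause_charge (big_setID (cycle_part j)) /=; congr (_ + _).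
by apply: eq_bigl => x; rewrite (setIidPr (cycle_part_sub j)).
Qed.

Lemma card_hit_cycle_vx j : #|[set i in C j | hit (cycle_vx i j)]| = #|cycle_part j|.
Proof.
rewrite -(card_in_imset (f := fun i => cycle_vx i j)); last by move=> i i' _ _ [].
rewrite -(card_in_imset (f := fun x => val (phi x)) (D := cycle_part j)); last first.
  by move=> x y _ _ /val_inj /phi_inj.
apply: eq_card => r; apply/imsetP/imsetP => [[i] | [x /cycle_partP [i iCj xE] ->]].
  rewrite inE => /andP [iCj /hitP [x xE]] ->.
  by exists x => //; apply/cycle_partP; exists i.
by exists i; rewrite // inE iCj; apply/hitP; exists x.
Qed.

Lemma card_cycle_part j : #|cycle_part j| <= 3.
Proof. by rewrite -card_hit_cycle_vx -(C_card j) subset_leq_card // setIdE subsetIl. Qed.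

Lemma cycle_charge_le x j : x \in cycle_part j ->
  deg x + apex_charge x <= 4 + (clause_vx j \in used_nbrs x).
Proof.
case/cycle_partP => i _ /deg_cycle_vx; have := leq_b1 (apex_charge x).
by case: (_ \in _); case: (_ \in _); case: (_ \in _); case: (_ \in _) => /=; lia.
Qed.

Lemma rest_charge_le x j : x \in rest_part j -> deg x + apex_charge x <= 3.
Proof.
rewrite !inE => /andP [not_cyc clause_x].
have x_apex : val (phi x) != apex by rewrite -clause_of_eq_None (eqP clause_x).
have := deg_le_count x_apex; have := leq_b1 (apex_charge x).
have := valP (phi x); move: clause_x not_cyc; rewrite /apex_charge.
case: (val (phi x)) => [[[]|j']|[[i j'] [[|[|[|//]]] ?]]] //= /eqP [->] not_cyc iCj.
- move=> _ deg_le; rewrite addn0; apply: leq_trans deg_le _.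
  by apply: leq_trans (count_size _ _) _; rewrite size_map -cardE C_card.
- case/negP: not_cyc; apply/mapP; exists i; first by rewrite mem_enum.
  by congr inr; congr pair; apply: val_inj.
- by rewrite andbF => _; case: (_ \in _); case: (_ \in _) => /=; lia.
- by rewrite andbT; case: (_ \in _); case: (_ \in _); case: (apex_used _) => /=; lia.
Qed.

(* A vertex of G outside the image of phi lies on the image of at most one edge. *)
Lemma card_users_not_hit r : ~~ hit r -> #|[set x | r \in used_nbrs x]| <= 2.
Proof.
move=> r_free.
have [-> | [x1]] := set_0Vmem [set x | r \in used_nbrs x]; first by rewrite cards0.
rewrite inE => /imsetP [y1]; rewrite inE => x1y1 r1E.
have rho1 : rho x1 y1 = Some (hop x1 y1) by apply: hop_not_hit; rewrite -r1E.
apply: leq_trans (_ : #|[set x1; y1]| <= 2); last by rewrite cards2 ltnS leq_b1.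
apply/subset_leq_card/subsetP => x; rewrite inE => /imsetP [y]; rewrite inE => xy rE.
have hopE : hop x y = hop x1 y1 by apply: val_inj; rewrite -rE -r1E.
have rho_xy : rho x y = Some (hop x1 y1) by rewrite -hopE; apply: hop_not_hit; rewrite -rE.
by case: (rho_inj xy x1y1 rho_xy rho1) => -[-> _]; rewrite !inE eqxx ?orbT.
Qed.

Lemma rest_part_gt0 j : hit (clause_vx j) -> 0 < #|rest_part j|.
Proof.
case/hitP => x xE; apply/card_gt0P; exists x; rewrite !inE xE eqxx andbT.
by apply/mapP => -[i].
Qed.

(* Summed over the m clauses, the right-hand sides give 10 m |VH| (card_VH). *)
Lemma clause_charge_bound j : 3 <= m ->
  (2 * m + 1) * clause_charge j <= 10 + 10 * m * #|clause_part j| /\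
  ((2 * m + 1) * clause_charge j = 10 + 10 * m * #|clause_part j| ->
   [/\ #|rest_part j| = 0, #|cycle_part j| = 2 & clause_charge j = 10]).
Proof.
move=> m_ge3; set users := [set x in cycle_part j | clause_vx j \in used_nbrs x].
have cycle_le :
    \sum_(x in cycle_part j) (deg x + apex_charge x) <= 4 * #|cycle_part j| + #|users|.
  apply: leq_trans (_ : \sum_(x in cycle_part j) (4 + (clause_vx j \in used_nbrs x)) <= _).
    by apply: leq_sum => x; apply: cycle_charge_le.
  by rewrite big_split /= sum_nat_const sum_nat_of_bool mulnC.
have rest_le : \sum_(x in rest_part j) (deg x + apex_charge x) <= 3 * #|rest_part j|.
  apply: leq_trans (_ : \sum_(x in rest_part j) 3 <= _); last by rewrite sum_nat_const mulnC.
  by apply: leq_sum => x; apply: rest_charge_le.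
have users_le : #|users| <= #|cycle_part j|.
  by apply/subset_leq_card/subsetP => x; rewrite inE => /andP [].
have rest_or_users : 0 < #|rest_part j| \/ #|users| <= 2.
  have [/rest_part_gt0 | /card_users_not_hit users_le2] := boolP (hit (clause_vx j)).
    by left.
  by right; apply/leq_trans/users_le2/subset_leq_card/subsetP => x; rewrite !inE => /andP [].
rewrite card_clause_part.
apply: clause_arith m_ge3 (card_cycle_part j) users_le rest_or_users _.
by rewrite clause_charge_split leq_add.
Qed.

Lemma tight_clause_hit_next j :
  #|rest_part j| = 0 -> #|cycle_part j| = 2 -> clause_charge j = 10 ->
  forall i, i \in C j -> hit (cycle_vx i j) -> hit (cycle_vx i (next (ord i) j)).
Proof.
move=> /eqP; rewrite cards_eq0 => /eqP rest0 cyc2 charge10 i iCj /hitP [x xE].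
have x_cyc : x \in cycle_part j by apply/cycle_partP; exists i.
have deg4 : 4 <= deg x.
  suff : 10 <= deg x + apex_charge x + 5 by have := leq_b1 (apex_charge x); lia.
  rewrite -charge10 clause_charge_split rest0 big_set0 addn0 (big_setD1 x x_cyc) /= leq_add2l.
  have others1 : #|cycle_part j :\ x| = 1 by move: cyc2; rewrite (cardsD1 x) x_cyc => -[].
  apply: leq_trans (_ : \sum_(y in cycle_part j :\ x) 5 <= _); last first.
    by rewrite sum_nat_const others1.
  apply: leq_sum => y; rewrite in_setD1 => /andP [_ y_cyc].
  by apply: leq_trans (cycle_charge_le y_cyc) _; rewrite leq_add2l leq_b1.
have s_used : cycle_sub i j \in used_nbrs x.
  apply: contraLR deg4 => /negbTE s_unused; rewrite -ltnNge ltnS.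
  apply: leq_trans (deg_cycle_vx xE) _; rewrite s_unused addn0.
  by rewrite -[3]/(1 + 1 + 1) !leq_add ?leq_b1.
have s_free : ~~ hit (cycle_sub i j).
  apply/hitP => -[z zE].
  have : z \in rest_part j by rewrite !inE zE eqxx andbT; apply/mapP => -[].
  by rewrite rest0 inE.
case/imsetP: s_used => y; rewrite inE => xy sE.
by apply/hitP; exists y; apply: (subdiv_hop_far_end xy); rewrite -sE ?xE.
Qed.

Lemma sum_clause_parts (F : VH -> nat) :
  \sum_j \sum_(x in clause_part j) F x = \sum_(x | val (phi x) != apex) F x.
Proof.
rewrite (exchange_big_dep (fun x => val (phi x) != apex)) /=; last first.
  by move=> j x _; rewrite inE -clause_of_eq_None => /eqP ->.
apply: eq_bigr => x; rewrite -clause_of_eq_None.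
case xE: (clause_of _) => [j|] // _.
by rewrite (big_pred1 j) // => j'; rewrite inE xE eq_sym.
Qed.

Lemma apex_hit : 3 <= m -> 0 < #|VH| ->
  5 * m * #|VH| <= nedges eH * (2 * m + 1) -> hit apex.
Proof.
move=> m_ge3 VH_gt0 dense; apply: contraT => apex_free.
have deg_sum : \sum_x deg x <= #|VH| * 4.
  rewrite -sum_nat_const; apply: leq_sum => x _; apply: deg_le4.
  by apply: contraNneq apex_free => xE; apply/hitP; exists x.
have edges_le : 2 * nedges eH <= #|VH| * 4 := leq_trans (handshake_leq eH_irr eH_sym) deg_sum.
have medges_le : m * (2 * nedges eH) <= m * (#|VH| * 4) by rewrite leq_mul2l edges_le orbT.
have mVH_ge : 3 * #|VH| <= m * #|VH| by rewrite leq_mul2r m_ge3 orbT.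
lia.
Qed.

Section ApexImage.
Variable xa : VH.
Hypothesis xa_apex : val (phi xa) = apex.

Lemma phi_neq_apexE x : (val (phi x) != apex) = (x != xa).
Proof. by rewrite -xa_apex (inj_eq val_inj) (inj_eq phi_inj). Qed.

Lemma sum_deg_le_clause_charges : \sum_x deg x <= \sum_j clause_charge j.
Proof.
rewrite /clause_charge sum_clause_parts (eq_bigl _ _ phi_neq_apexE) (bigD1 xa) //= big_split /=.
rewrite addnC leq_add2l; apply: leq_trans (deg_apex_le xa_apex) _.
rewrite -sum1dep_card big_mkcond [X in _ <= X]big_mkcond /=.
apply: leq_sum => x _; case: (eqVneq x xa) => [-> | //].
by rewrite /apex_charge xa_apex.
Qed.

Lemma card_VH : #|VH| = 1 + \sum_j #|clause_part j|.
Proof.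
under eq_bigr do rewrite -sum1_card.
by rewrite sum_clause_parts (eq_bigl _ _ phi_neq_apexE) -sum1_card (bigD1 xa).
Qed.

End ApexImage.

Lemma clause_charges_tight : 3 <= m -> 0 < #|VH| ->
    5 * m * #|VH| <= nedges eH * (2 * m + 1) ->
  forall j, (2 * m + 1) * clause_charge j = 10 + 10 * m * #|clause_part j|.
Proof.
move=> m_ge3 VH_gt0 dense.
have /hitP [xa xa_apex] := apex_hit m_ge3 VH_gt0 dense.
have total :
    \sum_j (10 + 10 * m * #|clause_part j|) <= \sum_j (2 * m + 1) * clause_charge j.
  have -> : \sum_j (10 + 10 * m * #|clause_part j|) = 10 * m * #|VH|.
    by rewrite big_split /= sum_nat_const card_ord -big_distrr (card_VH xa_apex) /=; lia.
  have edges_le : 2 * nedges eH <= \sum_j clause_charge j :=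
    leq_trans (handshake_leq eH_irr eH_sym) (sum_deg_le_clause_charges xa_apex).
  have charges_ge : (2 * m + 1) * (2 * nedges eH) <= \sum_j (2 * m + 1) * clause_charge j.
    by rewrite -big_distrr leq_mul2l edges_le orbT.
  lia.
have bound j := leqif_eq (clause_charge_bound j m_ge3).1.
have := geq_leqif (@leqif_sum _ xpredT _ _ _ (fun j _ => bound j)).
by rewrite total => /esym /forall_inP tight j; apply/eqP/tight.
Qed.

Lemma dense_minor_one_in_three : 3 <= m -> 0 < #|VH| ->
    5 * m * #|VH| <= nedges eH * (2 * m + 1) ->
  exists alpha : 'I_p -> bool, forall j, #|[set i in C j | alpha i]| = 1.
Proof.
move=> m_ge3 VH_gt0 dense.
have tight j := (clause_charge_bound j m_ge3).2 (clause_charges_tight m_ge3 VH_gt0 dense j).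
apply: (@exactly_one_unmarked (fun i j => hit (cycle_vx i j))).
  apply: clause_next_closed => i j.
  by have [rest0 cyc2 charge10] := tight j; apply: tight_clause_hit_next.
by move=> j; have [_ cyc2 _] := tight j; rewrite card_hit_cycle_vx.
Qed.

End Embedding.
End Construction.

Theorem lemma3 (p m : nat) (C : 'I_m -> {set 'I_p})
    (ord : 'I_p -> seq 'I_m)
    (hC : forall j : 'I_m, #|C j| = 3)
    (hdeg : forall i : 'I_p, 3 <= #|[set j : 'I_m | i \in C j]|)
    (hord_uniq : forall i : 'I_p, uniq (ord i))
    (hord_mem : forall (i : 'I_p) (j : 'I_m), (j \in ord i) = (i \in C j)) :
  (exists (VH : finType) (eH : rel VH),
      simple_graph eH /\
      half_shallow_top_minor eH (@Gadj p m C ord) /\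
      (((5 * m)%N)%:R / ((2 * m + 1)%N)%:R <= density eH)%R) ->
  exists alpha : 'I_p -> bool,
    forall j : 'I_m, #|[set i in C j | alpha i]| = 1.
Proof.
move=> [VH [eH [[eH_sym eH_irr] [[phi [rho [phi_inj [rho_edge rho_inj]]]] dense]]]].
have [m0 | m_gt0] := posnP m.
  by exists xpred0 => j; have := ltn_ord j; rewrite [X in _ < X]m0.
have m_ge3 : 3 <= m.
  have /card_gt0P [i _] : 0 < #|C (Ordinal m_gt0)| by rewrite hC.
  by apply: leq_trans (hdeg i) _; rewrite -[m in _ <= m]card_ord max_card.
have [VH_gt0 dense_nat] : 0 < #|VH| /\ 5 * m * #|VH| <= nedges eH * (2 * m + 1).
  by apply: (nat_ratio_le (R := rat)) dense; rewrite ?muln_gt0 ?m_gt0 ?addn1.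
exact: (dense_minor_one_in_three hC hord_uniq hord_mem eH_sym eH_irr phi_inj rho_edge rho_inj).
Qed.
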